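(* In the setup of the context, for all $x,y,z\in B$: (a) if $\gamma_{x,y,z}\neq0$, then $t_x\sim_{\mathcal L}t_y^\ast$, $t_y\sim_{\mathcal L}t_z^\ast$ and $t_z\sim_{\mathcal L}t_x^\ast$ (left cells of $J$ with respect to the basis $(t_w)$); (b) if $t_x\sim_{\mathcal L}t_y$ in $J$, then $x\sim_{\mathcal L}y$ in $H$ (left cells of $H$ with respect to $B$); hence the partition of $B$ into $J$-left cells refines the partition into $H$-left cells; (c) the analogous statements of (b) hold for right cells and two-sided cells; (d) $t_x\sim_{\mathcal{LR}}t_x^\ast$.
   Context: Cells: for a ring $A$ acting on a module $M$ (left, right, or two-sided) which is free over the base ring $k$ with basis $C$, write $c\leftarrow c'$ if there is $h$ in $A$ (resp. a product $hc'h'$ in the bimodule case) such that $c$ occurs with nonzero coefficient in the expansion of $hc'$ (resp. $c'h$, $hc'h'$) in the basis $C$; $\preceq$ is the transitive closure of $\leftarrow$, and cells are the classes of the equivalence relation $c\sim c'\iff c\preceq c'\preceq c$. $\sim_{\mathcal L}$, $\sim_{\mathcal R}$, $\sim_{\mathcal{LR}}$ refer to the regular left, right and bimodule. Setup: $\Gamma$ totally ordered abelian group; $K$ field with surjective valuation $\nu$, valuation ring $\mathcal O$, maximal ideal $\mathfrak m$, formally real residue field $F$; $H$ finite-dimensional split semisimple symmetric $K$-algebra with trace $\tau$, $K$-linear involutive antiautomorphism $\ast$, $\ast$-symmetric basis $B$ ($B^\ast=B$, $\tau(bc^\ast)=\delta_{bc}$). With Schur elements $c_\lambda$ ($\tau=\sum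 c_\lambda^{-1}\chi_\lambda$), $a_\lambda=-\tfrac12\nu(c_\lambda)\in\Gamma$, a homomorphism $\gamma\mapsto v^\gamma$ on $\langle a_\lambda\rangle$ with $\nu(v^\gamma)=\gamma$, $f_\lambda=v^{2a_\lambda}c_\lambda$, balanced representations $\rho_\lambda$ (irreducible of type $\lambda$, $\nu(\rho_\lambda(b))\ge-a_\lambda$ for $b$ in every $\ast$-symmetric basis) and $c^\lambda(x)=v^{a_\lambda}\rho_\lambda(x)\bmod\mathfrak m$, set $\gamma_{x,y,z}=\sum_\lambda\sum_{\mathfrak{s,t,u}}f_\lambda^{-1}c^\lambda(x)_{\mathfrak{st}}c^\lambda(y)_{\mathfrak{tu}}c^\lambda(z)_{\mathfrak{us}}\in F$. $J$ is the $F$-algebra with basis $(t_x)_{x\in B}$ and product $t_xt_y=\sum_z\gamma_{x,y,z}t_{z^\ast}$, with $t_x^\ast:=t_{x^\ast}$. *)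

From HB Require Import structures.
From mathcomp Require Import all_boot all_order all_algebra all_field.
From Stdlib Require Import Relation_Operators.
Set Implicit Arguments. Unset Strict Implicit. Unset Printing Implicit Defensive.
Import Order.TTheory GRing.Theory Num.Theory.
Local Open Scope ring_scope.

Definition ordered_abelian_group (G : zmodType) (leG : rel G) : Prop :=
  [/\ reflexive leG, antisymmetric leG, transitive leG,
      (forall x y, leG x y || leG y x) &
      (forall x y z, leG x y -> leG (x + z) (y + z))].

(* nu 0 is irrelevant (stands for +infinity). *)
Definition surj_valuation (K : fieldType) (G : zmodType) (leG : rel G)
    (nu : K -> G) : Prop :=
  [/\ (forall x y, x != 0 -> y != 0 -> nu (x * y) = nu x + nu y),
      (forall x y, x != 0 -> y != 0 -> x + y != 0 ->
          leG (nu x) (nu (x + y)) || leG (nu y) (nu (x + y))) &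
      (forall g, exists x, x != 0 /\ nu x = g)].

Definition valO (K : fieldType) (G : zmodType) (leG : rel G) (nu : K -> G) :
  pred K := fun x => (x == 0) || leG 0 (nu x).
Definition valm (K : fieldType) (G : zmodType) (leG : rel G) (nu : K -> G) :
  pred K := fun x => (x == 0) || (leG 0 (nu x) && (nu x != 0)).

(* "nu x >= g" with the convention nu 0 = +infinity *)
Definition val_ge (K : fieldType) (G : zmodType) (leG : rel G) (nu : K -> G)
  (x : K) (g : G) : Prop := x = 0 \/ leG g (nu x).

(* pi : O -> F is a surjective ring morphism with kernel m, i.e. F = O/m
   is the residue field (pi is only meaningful on O). *)
Definition residue_map (K F : fieldType) (G : zmodType) (leG : rel G)
    (nu : K -> G) (pi : K -> F) : Prop :=
  [/\ {in valO leG nu &, forall x y, pi (x + y) = pi x + pi y},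
      {in valO leG nu &, forall x y, pi (x * y) = pi x * pi y},
      pi 1 = 1,
      {in valO leG nu, forall x, (pi x == 0) = (x \in valm leG nu)} &
      (forall f : F, exists2 x, x \in valO leG nu & pi x = f)].

Definition formally_real (F : fieldType) : Prop :=
  forall s : seq F, \sum_(x <- s) x ^+ 2 != -1.

Definition is_trace_form (K : fieldType) (H : falgType K) (tau : H -> K) :=
  [/\ (forall (a : K) (u v : H), tau (a *: u + v) = a * tau u + tau v),
      (forall u v : H, tau (u * v) = tau (v * u)) &
      (forall u : H, (forall v, tau (u * v) = 0) -> u = 0)].

Definition is_lin_invol_antiaut (K : fieldType) (H : falgType K)
    (star : H -> H) :=
  [/\ (forall (a : K) (u v : H), star (a *: u + v) = a *: star u + star v),
      (forall u v : H, star (u * v) = star v * star u) &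
      involutive star].

Definition star_sym_basis (K : fieldType) (H : falgType K) (tau : H -> K)
    (star : H -> H) (B : seq H) : Prop :=
  [/\ basis_of fullv B,
      {in B, forall b, star b \in B} &
      {in B &, forall b c, tau (b * star c) = (b == c)%:R}].

Definition is_repr (K : fieldType) (H : falgType K) (d : nat)
    (rho : H -> 'M[K]_d) : Prop :=
  [/\ (forall (a : K) (u v : H), rho (a *: u + v) = a *: rho u + rho v),
      (forall u v : H, rho (u * v) = rho u *m rho v) &
      rho 1 = 1%:M].

(* c^lambda(x) = v^{a_lambda} rho_lambda(x) mod m *)
Definition clam (K F : fieldType) (H : falgType K) (pi : K -> F)
   (d : nat) (rho : H -> 'M[K]_d) (va : K) (x : H) : 'M[F]_d :=
  \matrix_(s, t) pi (va * rho x s t).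

(* f_lambda = v^{2 a_lambda} c_lambda, v2a stands for v^{2 a_lambda} *)
Definition gammaJ (K F : fieldType) (H : falgType K) (pi : K -> F)
   (L : finType) (d : L -> nat) (rho : forall l, H -> 'M[K]_(d l))
   (va v2a c : L -> K) (x y z : H) : F :=
  \sum_(l : L) \sum_(s < d l) \sum_(t < d l) \sum_(u < d l)
     (pi (v2a l * c l))^-1 * clam pi (rho l) (va l) x s t
       * clam pi (rho l) (va l) y t u * clam pi (rho l) (va l) z u s.

Definition cells_of (I : Type) (step : I -> I -> Prop) (i j : I) : Prop :=
  clos_trans I step i j /\ clos_trans I step j i.

Definition H_left_step (K : fieldType) (H : falgType K) (n : nat)
  (B : n.-tuple H) (i j : 'I_n) : Prop :=
  exists h : H, coord B i (h * tnth B j) != 0.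
Definition H_right_step (K : fieldType) (H : falgType K) (n : nat)
  (B : n.-tuple H) (i j : 'I_n) : Prop :=
  exists h : H, coord B i (tnth B j * h) != 0.
Definition H_twosided_step (K : fieldType) (H : falgType K) (n : nat)
  (B : n.-tuple H) (i j : 'I_n) : Prop :=
  exists h h' : H, coord B i (h * tnth B j * h') != 0.

(* J: elements are coordinate vectors (w |-> coefficient of t_w),
   product t_x t_y = sum_z gam x y z t_{st z} (st z = index of z^* ). *)
Definition Jmul (F : fieldType) (n : nat) (st : 'I_n -> 'I_n)
  (gam : 'I_n -> 'I_n -> 'I_n -> F) (a b : 'I_n -> F) : 'I_n -> F :=
  fun w => \sum_(x < n) \sum_(y < n) \sum_(z < n)
             (if st z == w then a x * b y * gam x y z else 0).
Definition tJ (F : fieldType) (n : nat) (x : 'I_n) : 'I_n -> F :=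
  fun w => (w == x)%:R.

Definition J_left_step (F : fieldType) (n : nat) (st : 'I_n -> 'I_n)
  (gam : 'I_n -> 'I_n -> 'I_n -> F) (i j : 'I_n) : Prop :=
  exists h : 'I_n -> F, Jmul st gam h (tJ F j) i != 0.
Definition J_right_step (F : fieldType) (n : nat) (st : 'I_n -> 'I_n)
  (gam : 'I_n -> 'I_n -> 'I_n -> F) (i j : 'I_n) : Prop :=
  exists h : 'I_n -> F, Jmul st gam (tJ F j) h i != 0.
Definition J_twosided_step (F : fieldType) (n : nat) (st : 'I_n -> 'I_n)
  (gam : 'I_n -> 'I_n -> 'I_n -> F) (i j : 'I_n) : Prop :=
  exists h h' : 'I_n -> F, Jmul st gam (Jmul st gam h (tJ F j)) h' i != 0.

Definition in_agrp (G : zmodType) (L : finType) (a : L -> G) (g : G) : Prop :=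
  exists k : L -> int, g = \sum_(l : L) a l *~ k l.

From HB Require Import structures.
From mathcomp Require Import all_boot all_order all_algebra all_field.
From Stdlib Require Import Relation_Operators.
Set Implicit Arguments. Unset Strict Implicit. Unset Printing Implicit Defensive.
Import Order.TTheory GRing.Theory Num.Theory.
Local Open Scope ring_scope.

(** Reducing the balanced representations modulo the maximal ideal turns the
    matrices [v^(a_l) rho_l(b_x)] into matrices [c^l(x)] over [F].  The Schur
    orthogonality relations survive the reduction, so [t_x |-> (c^l(x))_l] maps
    [J] multiplicatively onto [prod_l M_(d_l)(F)], and [gamma_(x,y,z)] is a
    weighted sum of the traces of [c^l(x) c^l(y) c^l(z)].  Hence [gamma_(x,y,z) <> 0]
    forces [b_y b_z <> 0] in [H], which gives the comparisons of cells (b) and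
    (c), while matrix units of [J] witness the relations (a) and (d).  For (a)
    one also needs that [c^l(x) c^l(y) <> 0] implies [c^m(y') c^m(x') <> 0] for
    some [m], where [b_x' = star b_x]: the representation
    [h |-> (rho_l (star h))^T] is intertwined with some [rho_m], and such an
    intertwiner divided by an entry of least valuation reduces to a nonzero,
    hence left-injective, intertwiner over [F]. *)

Lemma clos_trans_sub (I : Type) (R S : I -> I -> Prop) :
  (forall i j, R i j -> clos_trans I S i j) ->
  forall i j, clos_trans I R i j -> clos_trans I S i j.
Proof. by move=> RS i j; elim=> [? ? /RS // | ? ? ? _ ? _]; apply: t_trans. Qed.

Lemma cells_of_sub (I : Type) (R S : I -> I -> Prop) :
  (forall i j, R i j -> clos_trans I S i j) ->
  forall i j, cells_of R i j -> cells_of S i j.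
Proof. by move=> RS i j [Rij Rji]; split; apply: clos_trans_sub RS _ _ _. Qed.

Lemma sumr_neq0P (R : nmodType) (I : finType) (E : I -> R) :
  \sum_i E i != 0 -> exists i, E i != 0.
Proof.
move=> s0; apply/existsP; apply: contraNT s0 => /existsPn E0.
by apply/eqP/big1 => i _; apply/eqP/negPn/E0.
Qed.

Lemma matrix_neq0P (R : nmodType) m p (X : 'M[R]_(m, p)) :
  X != 0 -> exists i j, X i j != 0.
Proof.
move=> X0; have /existsP[[i j] /= Xij] : [exists ij : 'I_m * 'I_p, X ij.1 ij.2 != 0].
  apply: contraNT X0 => /existsPn X0; apply/eqP/matrixP => i j.
  by rewrite mxE; apply/eqP/negPn/(X0 (i, j)).
by exists i, j.
Qed.

Lemma mxtrace_delta_mul (R : pzSemiRingType) m (i j : 'I_m) (X : 'M[R]_m) :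
  \tr (delta_mx i j *m X) = X j i.
Proof.
rewrite /mxtrace (bigD1 i) //= big1 ?addr0 => [|k /negbTE ki].
  rewrite mxE (bigD1 j) //= big1 ?addr0 => [|l /negbTE lj]; first by rewrite mxE !eqxx mul1r.
  by rewrite mxE lj andbF mul0r.
by rewrite mxE big1 // => l _; rewrite mxE ki mul0r.
Qed.

Lemma mulmx_delta (R : pzSemiRingType) m p (A : 'M[R]_(m, p)) (j k : 'I_p) :
  A *m delta_mx j k = \sum_i A i j *: delta_mx i k.
Proof.
rewrite {1}[A]matrix_sum_delta mulmx_suml; apply: eq_bigr => i _.
rewrite mulmx_suml (bigD1 j) //= big1 ?addr0 => [|r /negbTE rj].
  by rewrite -scalemxAl mul_delta_mx.
by rewrite -scalemxAl mul_delta_mx_cond rj mulr0n scaler0.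
Qed.

(* The matrix unit [E_ij] of the block [l] of [prod_l' 'M_(d l')]; indices are
   compared in [nat] because [i j : 'I_(d l)] while [p q : 'I_(d l')]. *)
Definition block_delta (R : pzSemiRingType) (I : eqType) (d : I -> nat) (l : I)
    (i j : 'I_(d l)) (l' : I) : 'M[R]_(d l') :=
  \matrix_(p, q) ((l' == l) && (p == i :> nat) && (q == j :> nat))%:R.
Arguments block_delta {R I} d l i j l'.

Lemma block_delta_id (R : pzSemiRingType) (I : eqType) (d : I -> nat) l (i j : 'I_(d l)) :
  block_delta d l i j l = delta_mx i j :> 'M[R]_(d l).
Proof. by apply/matrixP => p q; rewrite !mxE eqxx. Qed.

Lemma block_delta_neq (R : pzSemiRingType) (I : eqType) (d : I -> nat) l (i j : 'I_(d l)) l' :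
  l' != l -> block_delta d l i j l' = 0 :> 'M[R]_(d l').
Proof. by move=> /negbTE ll'; apply/matrixP => p q; rewrite !mxE ll'. Qed.

Lemma sum_block_delta (R : pzSemiRingType) (I : finType) (d : I -> nat)
    (N : forall l, 'M[R]_(d l)) l :
  \sum_l' \sum_s \sum_t N l' s t *: block_delta d l' s t l = N l.
Proof.
rewrite (bigD1 l) //= [X in _ + X]big1 => [|l' l'l]; last first.
  by apply: big1 => s _; apply: big1 => t _; rewrite block_delta_neq ?scaler0 // eq_sym.
rewrite addr0 [RHS]matrix_sum_delta; apply: eq_bigr => s _; apply: eq_bigr => t _.
by rewrite block_delta_id.
Qed.

Lemma trace_block_delta (R : comPzSemiRingType) (I : finType) (d : I -> nat)
    (w : I -> R) (N : forall l, 'M[R]_(d l)) m (p q : 'I_(d m)) :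
  \sum_l w l * \tr (block_delta d m p q l *m N l) = w m * N m q p.
Proof.
rewrite (bigD1 m) //= [X in _ + X]big1 => [|l lm]; last first.
  by rewrite block_delta_neq // mul0mx linear0 mulr0.
by rewrite block_delta_id mxtrace_delta_mul addr0.
Qed.

Lemma mulmx_delta_mulmxE (R : pzSemiRingType) m p k (Y : 'M[R]_(m, p)) (M : 'M[R]_(p, k)) q r i j :
  (Y *m delta_mx q r *m M) i j = Y i q * M r j.
Proof.
rewrite -mulmxA mxE (bigD1 q) //= big1 => [|s /negbTE sq]; last first.
  by rewrite mxE big1 ?mulr0 // => t _; rewrite mxE sq mul0r.
rewrite addr0 mxE (bigD1 r) //= big1 => [|t /negbTE tr]; last by rewrite mxE tr andbF mul0r.
by rewrite mxE !eqxx mul1r addr0.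
Qed.

Section SymmetricAlgebra.

Variables (K : fieldType) (H : falgType K) (tau : H -> K) (star : H -> H).
Variables (n : nat) (B : n.-tuple H) (st : 'I_n -> 'I_n).
Hypotheses (htau : is_trace_form tau) (hstar : is_lin_invol_antiaut star).
Hypotheses (hB : star_sym_basis tau star B) (hst : forall i, star (tnth B i) = tnth B (st i)).

Lemma tau_is_linear : scalar tau.
Proof. by case: htau => lin _ _ a u v; rewrite lin. Qed.
#[local] HB.instance Definition _ := GRing.isLinear.Build K H K _ tau tau_is_linear.

Lemma tauC u v : tau (u * v) = tau (v * u). Proof. by case: htau. Qed.

Lemma tnth_basis_inj : injective (tnth B).
Proof. by case: hB => /basis_free /free_uniq /tuple_uniqP. Qed.

Lemma st_involutive : involutive st.
Proof. by move=> i; apply: tnth_basis_inj; case: hstar => _ _ starK; rewrite -!hst starK. Qed.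

Lemma basis_expansion h : h = \sum_i coord B i h *: tnth B i.
Proof.
case: hB => /andP[/eqP spanB _] _ _; rewrite {1}(coord_span (_ : h \in span B)) ?spanB ?memvf //.
by apply: eq_bigr => i _; rewrite (tnth_nth 0).
Qed.

Lemma tau_basis_star i j : tau (tnth B i * tnth B (st j)) = (i == j)%:R.
Proof. by case: hB => _ _ orth; rewrite -hst orth ?mem_tnth // (inj_eq tnth_basis_inj). Qed.

Lemma coord_tau i h : coord B i h = tau (h * tnth B (st i)).
Proof.
rewrite {2}[h]basis_expansion mulr_suml linear_sum (bigD1 i) //= big1 => [|j ji].
  by rewrite -scalerAl linearZ /= tau_basis_star eqxx mulr1 addr0.
by rewrite -scalerAl linearZ /= tau_basis_star (negbTE ji) mulr0.
Qed.

Lemma coord_neq0P h : h != 0 -> exists i, coord B i h != 0.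
Proof.
move=> h0; apply/existsP; apply: contraNT h0 => /existsPn c0; apply/eqP.
by rewrite [h]basis_expansion big1 // => i _; rewrite (eqP (negPn (c0 i))) scale0r.
Qed.

Lemma H_left_step_mul i k : tnth B k * tnth B (st i) != 0 -> H_left_step B i k.
Proof.
case/coord_neq0P => j; rewrite coord_tau => nz; exists (tnth B (st j)).
by rewrite coord_tau -mulrA tauC.
Qed.

Lemma H_right_step_mul i k : tnth B (st i) * tnth B k != 0 -> H_right_step B i k.
Proof.
case/coord_neq0P => j; rewrite coord_tau => nz; exists (tnth B (st j)).
by rewrite coord_tau tauC mulrA.
Qed.

End SymmetricAlgebra.

Section Wedderburn.

Variables (K : fieldType) (H : falgType K) (tau : H -> K) (star : H -> H).
Variables (n : nat) (B : n.-tuple H) (st : 'I_n -> 'I_n).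
Hypotheses (htau : is_trace_form tau) (hstar : is_lin_invol_antiaut star).
Hypotheses (hB : star_sym_basis tau star B) (hst : forall i, star (tnth B i) = tnth B (st i)).
Variables (L : finType) (d : L -> nat) (rho : forall l, H -> 'M[K]_(d l)) (c : L -> K).
Hypotheses (hrho : forall l, is_repr (rho l)) (hd : forall l, (0 < d l)%N).
Hypothesis hWinj : forall h : H, (forall l, rho l h = 0) -> h = 0.
Hypothesis hWsurj : forall M : forall l, 'M[K]_(d l), exists h : H, forall l, rho l h = M l.
Hypotheses (hc0 : forall l, c l != 0).
Hypothesis hschur : forall h : H, tau h = \sum_l (c l)^-1 * \tr (rho l h).

(* Canonical linear structures cannot be keyed on the family [rho], only on one
   block [rho l] at a time. *)
Section OneBlock.

Variable l : L.

Lemma rho_is_linear : linear (rho l).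
Proof. by case: (hrho l) => lin _ _ a u v; rewrite lin. Qed.
#[local] HB.instance Definition _ := GRing.isLinear.Build K H 'M[K]_(d l) _ (rho l) rho_is_linear.

Lemma rho0 : rho l 0 = 0. Proof. exact: linear0. Qed.
Lemma rhoZ a u : rho l (a *: u) = a *: rho l u. Proof. exact: linearZ. Qed.
Lemma rhoB u v : rho l (u - v) = rho l u - rho l v. Proof. exact: linearB. Qed.
Lemma rho_sum (I : Type) (r : seq I) (P : pred I) (E : I -> H) :
  rho l (\sum_(i <- r | P i) E i) = \sum_(i <- r | P i) rho l (E i).
Proof. exact: linear_sum. Qed.

End OneBlock.

Lemma star_is_linear : linear star.
Proof. by case: hstar => lin _ _ a u v; rewrite lin. Qed.
#[local] HB.instance Definition _ := GRing.isLinear.Build K H H _ star star_is_linear.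

Lemma rhoM l u v : rho l (u * v) = rho l u *m rho l v. Proof. by case: (hrho l). Qed.

Lemma rho_neq0P h : h != 0 -> exists l, rho l h != 0.
Proof.
move=> h0; apply/existsP; apply: contraNT h0 => /existsPn r0; apply/eqP.
by apply: hWinj => l; apply/eqP/negPn.
Qed.

Lemma tau_mul_block_delta l (i j : 'I_(d l)) h x :
  (forall l', rho l' h = block_delta d l i j l') -> tau (h * x) = (c l)^-1 * rho l x j i.
Proof.
move=> rh; rewrite hschur (bigD1 l) //= big1 => [|l' l'l]; last first.
  by rewrite rhoM rh block_delta_neq // mul0mx linear0 mulr0.
by rewrite rhoM rh block_delta_id mxtrace_delta_mul addr0.
Qed.

Lemma schur_orthogonality l m (s t : 'I_(d l)) :
  \sum_i rho l (tnth B (st i)) t s *: rho m (tnth B i) = c l *: block_delta d l s t m.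
Proof.
have [h rh] := hWsurj (block_delta d l s t).
rewrite -rh [h](basis_expansion hB) rho_sum scaler_sumr; apply: eq_bigr => i _.
by rewrite rhoZ (coord_tau htau hB hst) (tau_mul_block_delta _ rh) scalerA mulVKf.
Qed.

Lemma mul_block_column l (j0 : 'I_(d l)) (E : 'I_(d l) -> H) :
  (forall i l', rho l' (E i) = block_delta d l i j0 l') ->
  forall h j, h * E j = \sum_i rho l h i j *: E i.
Proof.
move=> rE h j; apply/eqP; rewrite -subr_eq0; apply/eqP/hWinj => l'.
rewrite rhoB rho_sum rhoM; apply/eqP; rewrite subr_eq0; apply/eqP.
under eq_bigr do rewrite rhoZ rE.
case: (eqVneq l' l) => [-> | l'l].
  by rewrite rE block_delta_id mulmx_delta; apply: eq_bigr => i _; rewrite block_delta_id.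
rewrite rE block_delta_neq // mulmx0 big1 // => i _.
by rewrite block_delta_neq // scaler0.
Qed.

Lemma rho_star_intertwiner l : exists m (X : 'M[K]_(d m, d l)),
  X != 0 /\ forall h, X *m rho l h = (rho m (star h))^T *m X.
Proof.
pose j0 := Ordinal (hd l).
have [E rE] : exists E : 'I_(d l) -> H, forall i l', rho l' (E i) = block_delta d l i j0 l'.
  exact: (@fin_all_exists _ (fun=> H) _ (fun i => hWsurj (block_delta d l i j0))).
have [_ starM starK] := hstar.
have E0 : E j0 != 0.
  apply/eqP => E0; have := rE j0 l; rewrite E0 rho0 block_delta_id => /matrixP/(_ j0 j0).
  by rewrite !mxE !eqxx => /eqP; rewrite eq_sym oner_eq0.
have [m rm] : exists m, rho m (star (E j0)) != 0.
  by apply: rho_neq0P; apply: contra_neq E0 => sE0; rewrite -[E j0]starK sE0 linear0.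
have [q0 [p0 nz]] := matrix_neq0P rm.
exists m, (\matrix_(p, i) rho m (star (E i)) q0 p); split.
  by apply: contra_neq nz => /matrixP/(_ p0 j0); rewrite !mxE.
move=> h; apply/matrixP => p j.
transitivity ((rho m (star (E j)) *m rho m (star h)) q0 p).
  rewrite -rhoM -starM (mul_block_column rE) linear_sum rho_sum summxE mxE; apply: eq_bigr => i _.
  by rewrite linearZ rhoZ !mxE mulrC.
by rewrite !mxE; apply: eq_bigr => k _; rewrite !mxE mulrC.
Qed.

End Wedderburn.

Section JAlgebra.

Variables (F : fieldType) (n : nat) (st : 'I_n -> 'I_n) (g : 'I_n -> 'I_n -> 'I_n -> F).
Hypothesis stK : involutive st.

Lemma JmulE u v w : Jmul st g u v w = \sum_x \sum_y u x * v y * g x y (st w).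
Proof.
apply: eq_bigr => x _; apply: eq_bigr => y _.
rewrite -big_mkcond (big_pred1 (st w)) // => z /=.
by apply/eqP/eqP => [<- | ->]; rewrite ?stK.
Qed.

Lemma Jmul_tJl x v w : Jmul st g (tJ F x) v w = \sum_y v y * g x y (st w).
Proof.
rewrite JmulE (bigD1 x) //= [X in _ + X]big1 => [|x' /negbTE x'x]; last first.
  by apply: big1 => y _; rewrite /tJ x'x !mul0r.
by rewrite addr0; apply: eq_bigr => y _; rewrite /tJ eqxx mul1r.
Qed.

Lemma Jmul_tJr y u w : Jmul st g u (tJ F y) w = \sum_x u x * g x y (st w).
Proof.
rewrite JmulE; apply: eq_bigr => x _; rewrite (bigD1 y) //= [X in _ + X]big1 => [|y' /negbTE y'y].
  by rewrite /tJ eqxx mulr1 addr0.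
by rewrite /tJ y'y mulr0 mul0r.
Qed.

Lemma Jmul_suml u v w : Jmul st g u v w = \sum_x u x * Jmul st g (tJ F x) v w.
Proof.
rewrite JmulE; apply: eq_bigr => x _.
by rewrite Jmul_tJl mulr_sumr; apply: eq_bigr => y _; rewrite mulrA.
Qed.

Lemma J_twosided_step_split i k :
  J_twosided_step st g i k -> exists j, J_left_step st g j k /\ J_right_step st g i j.
Proof.
case=> h [h']; rewrite Jmul_suml => /sumr_neq0P [j].
by rewrite mulf_eq0 negb_or => /andP[hj h'j]; exists j; split; [exists h | exists h'].
Qed.

End JAlgebra.

Section ValuationRing.

Variables (G : zmodType) (leG : rel G) (K : fieldType) (nu : K -> G).
Variables (F : fieldType) (pi : K -> F).
Hypotheses (hG : ordered_abelian_group leG) (hnu : surj_valuation leG nu).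
Hypothesis hpi : residue_map leG nu pi.

Notation O := (valO leG nu).

Let leG_refl : reflexive leG. Proof. by case: hG. Qed.
Let leG_trans : transitive leG. Proof. by case: hG. Qed.
Let leG_add2r z x y : leG x y -> leG (x + z) (y + z).
Proof. by case: hG => _ _ _ _; apply. Qed.
Let nuM x y : x != 0 -> y != 0 -> nu (x * y) = nu x + nu y.
Proof. by case: hnu => + _ _; apply. Qed.

Lemma leG_total x y : leG x y || leG y x. Proof. by case: hG. Qed.

Lemma leG_subr_ge0 x y : leG x y -> leG 0 (y - x).
Proof. by move/(leG_add2r (- x)); rewrite subrr. Qed.

Lemma nu1 : nu 1 = 0.
Proof. by apply: (addrI (nu 1)); rewrite -nuM ?oner_neq0 // mulr1 addr0. Qed.

Lemma nuV x : x != 0 -> nu x^-1 = - nu x.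
Proof.
by move=> x0; apply/eqP; rewrite -addr_eq0 addrC -nuM ?invr_eq0 // mulfV // nu1.
Qed.

Lemma valOP x : x != 0 -> (x \in O) = leG 0 (nu x).
Proof. by rewrite unfold_in /valO => /negbTE ->. Qed.

Lemma valO_semiring_closed : semiring_closed O.
Proof.
have O0 : 0 \in O by rewrite unfold_in /valO eqxx.
split; split; rewrite ?O0 ?valOP ?oner_neq0 ?nu1 // => x y.
- have [-> | x0] := eqVneq x 0; first by rewrite add0r.
  have [-> | y0] := eqVneq y 0; first by rewrite addr0.
  have [-> // | s0] := eqVneq (x + y) 0.
  rewrite !valOP // => ox oy; case: hnu => _ /(_ x y x0 y0 s0) + _.
  by case/orP; [apply: leG_trans ox | apply: leG_trans oy].
- have [-> | x0] := eqVneq x 0; first by rewrite mul0r.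
  have [-> | y0] := eqVneq y 0; first by rewrite mulr0.
  rewrite !valOP ?mulf_neq0 // nuM // => ox oy.
  by apply: leG_trans oy _; have := leG_add2r (nu y) ox; rewrite add0r.
Qed.

#[local] HB.instance Definition _ := GRing.isSemiringClosed.Build K O valO_semiring_closed.

Lemma valO_div x y : x != 0 -> (y != 0 -> leG (nu x) (nu y)) -> y / x \in O.
Proof.
move=> x0 le_xy; have [-> | y0] := eqVneq y 0; first by rewrite mul0r rpred0.
rewrite valOP ?mulf_neq0 ?invr_eq0 // nuM ?invr_eq0 // nuV // leG_subr_ge0 //.
exact: le_xy.
Qed.

Lemma piD : {in O &, {morph pi : x y / x + y}}. Proof. by case: hpi. Qed.

Lemma piM : {in O &, {morph pi : x y / x * y}}. Proof. by case: hpi. Qed.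

Lemma pi1 : pi 1 = 1. Proof. by case: hpi. Qed.

Lemma pi0 : pi 0 = 0.
Proof. by apply: (addrI (pi 0)); rewrite -piD ?rpred0 // !addr0. Qed.

Lemma pi_sum (I : Type) (r : seq I) (P : pred I) (E : I -> K) :
  (forall i, P i -> E i \in O) -> pi (\sum_(i <- r | P i) E i) = \sum_(i <- r | P i) pi (E i).
Proof.
move=> OE; elim: r => [|i r IHr]; first by rewrite !big_nil pi0.
rewrite !big_cons; case: ifP => // Pi.
by rewrite piD ?OE ?IHr // rpred_sum.
Qed.

Lemma pi_unit x : x != 0 -> nu x = 0 -> pi x != 0 /\ pi x^-1 = (pi x)^-1.
Proof.
move=> x0 nux; have Ox : x \in O by rewrite valOP // nux leG_refl.
have Oxi : x^-1 \in O by rewrite valOP ?invr_eq0 // nuV // nux oppr0 leG_refl.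
have inv : pi x^-1 * pi x = 1 by rewrite -piM // mulVf // pi1.
have px0 : pi x != 0 by apply: contra_eq_neq inv => ->; rewrite mulr0 eq_sym oner_neq0.
by split => //; apply: (mulIf px0); rewrite inv mulVf.
Qed.

Lemma map_mx_piM m p q (X : 'M[K]_(m, p)) (Y : 'M[K]_(p, q)) :
  X \is a mxOver O -> Y \is a mxOver O -> map_mx pi (X *m Y) = map_mx pi X *m map_mx pi Y.
Proof.
move=> /mxOverP OX /mxOverP OY; apply/matrixP => i j; rewrite !mxE pi_sum => [|k _].
  by apply: eq_bigr => k _; rewrite piM // !mxE.
exact: rpredM.
Qed.

Lemma map_mx_piZ m p (a : K) (X : 'M[K]_(m, p)) :
  a \in O -> X \is a mxOver O -> map_mx pi (a *: X) = pi a *: map_mx pi X.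
Proof. by move=> Oa /mxOverP OX; apply/matrixP => i j; rewrite !mxE piM. Qed.

Lemma mxtrace_map_pi m (X : 'M[K]_m) : X \is a mxOver O -> pi (\tr X) = \tr (map_mx pi X).
Proof.
by move=> /mxOverP OX; rewrite pi_sum => [|i _]; [apply: eq_bigr => i _; rewrite mxE | apply: OX].
Qed.

Lemma mxOver_normalize m p (X : 'M[K]_(m, p)) : X != 0 ->
  exists z i j, [/\ z != 0, z^-1 *: X \is a mxOver O & (z^-1 *: X) i j = 1].
Proof.
case/matrix_neq0P => i0 [j0 nz0].
have [[i j] /= nz min] := extremumP (fun ij : 'I_m * 'I_p => nu (X ij.1 ij.2))
  leG_refl leG_trans leG_total (nz0 : [pred ij | X ij.1 ij.2 != 0] (i0, j0)).
exists (X i j), i, j; split => //; last by rewrite mxE mulVf.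
apply/mxOverP => k l; rewrite mxE mulrC; apply: valO_div => // nzkl.
exact: (min (k, l)).
Qed.

Section Reduction.

Variables (H : falgType K) (tau : H -> K) (star : H -> H).
Variables (n : nat) (B : n.-tuple H) (st : 'I_n -> 'I_n).
Hypotheses (htau : is_trace_form tau) (hstar : is_lin_invol_antiaut star).
Hypotheses (hB : star_sym_basis tau star B) (hst : forall i, star (tnth B i) = tnth B (st i)).
Variables (L : finType) (d : L -> nat) (rho : forall l, H -> 'M[K]_(d l)) (c : L -> K).
Hypotheses (hrho : forall l, is_repr (rho l)) (hd : forall l, (0 < d l)%N).
Hypothesis hWinj : forall h : H, (forall l, rho l h = 0) -> h = 0.
Hypothesis hWsurj : forall M : forall l, 'M[K]_(d l), exists h : H, forall l, rho l h = M l.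
Hypotheses (hc0 : forall l, c l != 0).
Hypothesis hschur : forall h : H, tau h = \sum_l (c l)^-1 * \tr (rho l h).
Variables (a : L -> G) (vp : G -> K).
Hypothesis ha : forall l, nu (c l) = - (a l *+ 2).
Hypothesis hv : forall g, in_agrp a g -> vp g != 0 /\ nu (vp g) = g.
Hypothesis hvhom : forall g1 g2, in_agrp a g1 -> in_agrp a g2 -> vp (g1 + g2) = vp g1 * vp g2.
Hypothesis hbal : forall (l : L) (B' : seq H), star_sym_basis tau star B' ->
  forall b, b \in B' -> forall s t, val_ge leG nu (rho l b s t) (- a l).

Let stK : involutive st := st_involutive hstar hB hst.

(* [va l] is v^(a_l), [fr l] the residue of f_l, [cmx l i] the matrix c^l(b_i)
   and [jmx l] the representation of J on the block l. *)
Definition va l := vp (a l).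
Definition fv l := vp (a l *+ 2) * c l.
Definition fr l := pi (fv l).
Definition cmx l i : 'M[F]_(d l) := clam pi (rho l) (va l) (tnth B i).
Definition gam x y z :=
  gammaJ pi rho va (fun l => vp (a l *+ 2)) c (tnth B x) (tnth B y) (tnth B z).
Definition jmx l (u : 'I_n -> F) : 'M[F]_(d l) := \sum_i u i *: cmx l i.

Lemma in_agrp_a l : in_agrp a (a l).
Proof.
exists (fun m => (m == l)%:R); rewrite (bigD1 l) //= eqxx big1 ?addr0 // => m /negbTE ->.
by rewrite mulr0z.
Qed.

Lemma in_agrpD g1 g2 : in_agrp a g1 -> in_agrp a g2 -> in_agrp a (g1 + g2).
Proof.
case=> [k1 ->] [k2 ->]; exists (fun m => k1 m + k2 m).
by rewrite -big_split; apply: eq_bigr => m _; rewrite mulrzDr.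
Qed.

Lemma in_agrpB g1 g2 : in_agrp a g1 -> in_agrp a g2 -> in_agrp a (g1 - g2).
Proof.
case=> [k1 ->] [k2 ->]; exists (fun m => k1 m - k2 m).
by rewrite -sumrB; apply: eq_bigr => m _; rewrite mulrzBr.
Qed.

Lemma va_neq0 l : va l != 0. Proof. exact: (hv (in_agrp_a l)).1. Qed.

Lemma vp2 l : vp (a l *+ 2) = va l * va l.
Proof. by rewrite mulr2n (hvhom (in_agrp_a l) (in_agrp_a l)). Qed.

Lemma fv_neq0 l : fv l != 0. Proof. by rewrite /fv vp2 !mulf_neq0 ?va_neq0. Qed.

Lemma nu_fv l : nu (fv l) = 0.
Proof.
have [v0 nuv] := hv (in_agrpD (in_agrp_a l) (in_agrp_a l)).
by rewrite /fv mulr2n nuM ?hc0 // nuv ha mulr2n subrr.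
Qed.

Lemma fr_neq0 l : fr l != 0. Proof. exact: (pi_unit (fv_neq0 l) (nu_fv l)).1. Qed.

Lemma pi_fvV l : pi (fv l)^-1 = (fr l)^-1. Proof. exact: (pi_unit (fv_neq0 l) (nu_fv l)).2. Qed.

Lemma fvV_valO l : (fv l)^-1 \in O.
Proof. by rewrite valOP ?invr_eq0 ?fv_neq0 // nuV ?fv_neq0 // nu_fv oppr0 leG_refl. Qed.

Lemma va_ratio l m : exists al be,
  [/\ al \in O, be \in O, al * va l = be * va m & al = 1 \/ be = 1].
Proof.
have vp_ratio g1 g2 : leG 0 (g1 - g2) -> in_agrp a g1 -> in_agrp a g2 ->
    vp (g1 - g2) \in O /\ vp g1 = vp (g1 - g2) * vp g2.
  move=> le12 ag1 ag2; have ag12 := in_agrpB ag1 ag2; have [v0 nuv] := hv ag12.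
  by rewrite valOP // nuv -hvhom // subrK.
rewrite /va; case/orP: (leG_total 0 (a l - a m)) => [lelm | leml].
  have [Ov ->] := vp_ratio _ _ lelm (in_agrp_a l) (in_agrp_a m).
  by exists 1, (vp (a l - a m)); rewrite mul1r rpred1; split; [| | | left].
have lem : leG 0 (a m - a l) by rewrite -opprB -sub0r leG_subr_ge0.
have [Ov ->] := vp_ratio _ _ lem (in_agrp_a m) (in_agrp_a l).
by exists (vp (a m - a l)), 1; rewrite mul1r rpred1; split; [| | | right].
Qed.

Lemma scaled_rho_entry_valO l i s t : va l * rho l (tnth B i) s t \in O.
Proof.
have [-> | r0] := eqVneq (rho l (tnth B i) s t) 0; first by rewrite mulr0 rpred0.
case: (hbal hB (mem_tnth i B) s t) => [r0' | le_r]; first by rewrite r0' eqxx in r0.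
rewrite valOP ?mulf_neq0 ?va_neq0 // nuM ?va_neq0 // (hv (in_agrp_a l)).2.
by have := leG_add2r (a l) le_r; rewrite addNr addrC.
Qed.

Lemma scaled_rho_valO l i : va l *: rho l (tnth B i) \is a mxOver O.
Proof. by apply/mxOverP => s t; rewrite mxE scaled_rho_entry_valO. Qed.

Lemma cmxE l i : cmx l i = map_mx pi (va l *: rho l (tnth B i)).
Proof. by apply/matrixP => s t; rewrite !mxE. Qed.

Lemma scaled_rho_mulE l i j :
  (va l * va l) *: rho l (tnth B i * tnth B j) =
  (va l *: rho l (tnth B i)) *m (va l *: rho l (tnth B j)).
Proof. by rewrite (rhoM hrho) -scalemxAl -scalemxAr scalerA. Qed.

Lemma scaled_rho_mul_valO l i j : (va l * va l) *: rho l (tnth B i * tnth B j) \is a mxOver O.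
Proof. by rewrite scaled_rho_mulE mxOverM ?scaled_rho_valO. Qed.

Lemma cmx_mul l i j :
  cmx l i *m cmx l j = map_mx pi ((va l * va l) *: rho l (tnth B i * tnth B j)).
Proof. by rewrite !cmxE scaled_rho_mulE map_mx_piM ?scaled_rho_valO. Qed.

Lemma cmx_mul_neq0 l i j : cmx l i *m cmx l j != 0 -> tnth B i * tnth B j != 0.
Proof.
apply: contra_neq => b0; rewrite cmx_mul b0 (rho0 hrho) scaler0.
by apply/matrixP => s t; rewrite !mxE pi0.
Qed.

Lemma gamE x y z : gam x y z = \sum_l (fr l)^-1 * \tr (cmx l x *m cmx l y *m cmx l z).
Proof.
apply: eq_bigr => l _; rewrite /mxtrace mulr_sumr; apply: eq_bigr => s _.
rewrite mxE exchange_big mulr_sumr; apply: eq_bigr => u _.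
rewrite mxE [(cmx l x *m _) s u]mxE mulr_suml mulr_sumr; apply: eq_bigr => t _.
by rewrite !mulrA.
Qed.

Lemma gam_rot x y z : gam x y z = gam y z x.
Proof. by rewrite !gamE; apply: eq_bigr => l _; rewrite -mulmxA mxtrace_mulC. Qed.

Lemma gam_neq0 x y z : gam x y z != 0 -> exists l, cmx l x *m cmx l y *m cmx l z != 0.
Proof.
rewrite gamE => /sumr_neq0P [l]; rewrite mulf_eq0 negb_or => /andP[_ tr0].
by exists l; apply: contraNneq tr0 => ->; rewrite linear0.
Qed.

Lemma cmx_orthogonality l m (s t : 'I_(d l)) :
  \sum_i cmx l (st i) t s *: cmx m i = fr l *: block_delta d l s t m.
Proof.
apply/matrixP => u v.
have := congr1 (fun X : 'M_(d m) => X u v)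
  (schur_orthogonality htau hB hst hrho hWsurj hc0 hschur m s t).
rewrite summxE [RHS]mxE /=; under eq_bigr do rewrite mxE.
move=> schur.
transitivity (pi (va l * va m * \sum_i rho l (tnth B (st i)) t s * rho m (tnth B i) u v)).
  rewrite summxE mulr_sumr pi_sum => [|i _]; last by rewrite mulrACA rpredM ?scaled_rho_entry_valO.
  apply: eq_bigr => i _; rewrite mxE !cmxE !mxE -piM ?scaled_rho_entry_valO //.
  by rewrite mulrACA.
rewrite schur !mxE; case: (eqVneq m l) => [ml | _] /=; last by rewrite !mulr0 pi0.
by subst m; rewrite mulrA -vp2 -/(fv l); case: (_ && _); rewrite ?mulr1 ?mulr0 ?pi0.
Qed.

Lemma jmx_tJ l x : jmx l (tJ F x) = cmx l x.
Proof.
rewrite /jmx (bigD1 x) //= big1 => [|i /negbTE ix]; first by rewrite /tJ eqxx scale1r addr0.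
by rewrite /tJ ix scale0r.
Qed.

Lemma jmx_coord_inverse (N : forall l, 'M[F]_(d l)) l :
  jmx l (fun w => \sum_l' (fr l')^-1 * \tr (N l' *m cmx l' (st w))) = N l.
Proof.
rewrite -[RHS](sum_block_delta N l) /jmx.
transitivity (\sum_w \sum_l' \sum_s \sum_t
    ((fr l')^-1 * (N l' s t * cmx l' (st w) t s)) *: cmx l w).
  apply: eq_bigr => w _; rewrite scaler_suml; apply: eq_bigr => l' _.
  rewrite /mxtrace mulr_sumr scaler_suml; apply: eq_bigr => s _.
  by rewrite mxE mulr_sumr scaler_suml.
rewrite exchange_big; apply: eq_bigr => l' _.
rewrite exchange_big; apply: eq_bigr => s _.
rewrite exchange_big; apply: eq_bigr => t _.
transitivity (((fr l')^-1 * N l' s t) *: \sum_w cmx l' (st w) t s *: cmx l w).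
  by rewrite scaler_sumr; apply: eq_bigr => w _; rewrite scalerA mulrA.
by rewrite cmx_orthogonality scalerA mulrAC mulVf ?fr_neq0 ?mul1r.
Qed.

Lemma jmx_surj (N : forall l, 'M[F]_(d l)) : exists u, forall l, jmx l u = N l.
Proof. by eexists => l; apply: jmx_coord_inverse. Qed.

Lemma Jmul_trace u v w :
  Jmul st gam u v w = \sum_l (fr l)^-1 * \tr (jmx l u *m jmx l v *m cmx l (st w)).
Proof.
have jmx_expand l (Z : 'M[F]_(d l)) : \tr (jmx l u *m jmx l v *m Z) =
    \sum_x \sum_y u x * v y * \tr (cmx l x *m cmx l y *m Z).
  rewrite /jmx mulmx_suml mulmx_suml linear_sum; apply: eq_bigr => x _.
  rewrite mulmx_sumr mulmx_suml linear_sum; apply: eq_bigr => y _.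
  by rewrite -scalemxAl -scalemxAr -!scalemxAl !linearZ /= mulrA.
rewrite JmulE //; under [RHS]eq_bigr do rewrite jmx_expand mulr_sumr.
rewrite [RHS]exchange_big; apply: eq_bigr => x _; under [RHS]eq_bigr do rewrite mulr_sumr.
rewrite [RHS]exchange_big; apply: eq_bigr => y _.
by rewrite gamE mulr_sumr; apply: eq_bigr => l _; rewrite mulrCA.
Qed.

Lemma jmx_mul l u v : jmx l (Jmul st gam u v) = jmx l u *m jmx l v.
Proof.
rewrite -(jmx_coord_inverse (fun l => jmx l u *m jmx l v)).
by apply: eq_bigr => w _; rewrite Jmul_trace.
Qed.

Lemma trace_cmx_star x : \sum_l (fr l)^-1 * \tr (cmx l x *m cmx l (st x)) = 1.
Proof.
pose X l := (va l * va l) *: rho l (tnth B x * tnth B (st x)).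
have trX l : \tr (X l) \in O.
  by apply: rpred_sum => s _; apply: (mxOverP (scaled_rho_mul_valO l x (st x))).
have e l : (c l)^-1 * \tr (rho l (tnth B x * tnth B (st x))) = (fv l)^-1 * \tr (X l).
  rewrite mxtraceZ mulrA /fv vp2 invfM [_^-1 / _ * _]mulrAC.
  by rewrite mulVf ?mulf_neq0 ?va_neq0 ?mul1r.
have tau1 : tau (tnth B x * tnth B (st x)) = 1 by rewrite (tau_basis_star hB hst) eqxx.
rewrite -pi1 -[X in pi X]tau1 hschur (eq_bigr _ (fun l _ => e l)).
rewrite pi_sum => [|l _]; last by rewrite rpredM ?fvV_valO.
apply: eq_bigr => l _; rewrite piM ?fvV_valO // pi_fvV.
by rewrite mxtrace_map_pi ?scaled_rho_mul_valO // -cmx_mul.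
Qed.

Lemma map_pi_intertwiner l m (X : 'M[K]_(d m, d l)) al be i :
  X \is a mxOver O -> (forall h, X *m rho l h = (rho m (star h))^T *m X) ->
  al \in O -> be \in O -> al * va l = be * va m ->
  pi al *: (map_mx pi X *m cmx l i) = pi be *: ((cmx m (st i))^T *m map_mx pi X).
Proof.
move=> OX hX Oal Obe hab.
have OrT : (va m *: rho m (tnth B (st i)))^T \is a mxOver O.
  by apply/mxOverP => p q; rewrite !mxE scaled_rho_entry_valO.
rewrite !cmxE map_trmx -!map_mx_piM ?scaled_rho_valO // -!map_mx_piZ ?mxOverM ?scaled_rho_valO //.
by rewrite -scalemxAr scalerA hab hX hst linearZ /= -scalemxAl scalerA.
Qed.

Lemma cmx_star_scaled_intertwiner l : exists m (Y : 'M[F]_(d m, d l)) p q (ka kb : F),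
  [/\ Y p q = 1, ka = 1 \/ kb = 1 &
      forall i, ka *: (Y *m cmx l i) = kb *: ((cmx m (st i))^T *m Y)].
Proof.
have [m [X [X0 hX]]] := rho_star_intertwiner hstar hrho hd hWinj hWsurj l.
have [z [p [q [z0 OX Xpq]]]] := mxOver_normalize X0.
have hX' h : z^-1 *: X *m rho l h = (rho m (star h))^T *m (z^-1 *: X).
  by rewrite -scalemxAl hX scalemxAr.
(* [cmx l] and [cmx m] are scaled by different powers of [v]. *)
have [al [be [Oal Obe hab k1]]] := va_ratio l m.
exists m, (map_mx pi (z^-1 *: X)), p, q, (pi al), (pi be); split.
- by rewrite mxE Xpq pi1.
- by case: k1 => ->; [left | right]; rewrite pi1.
- by move=> i; apply: map_pi_intertwiner.
Qed.

Lemma cmx_star_intertwiner l : exists m (Y : 'M[F]_(d m, d l)) (k : F),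
  (forall i, Y *m cmx l i = k *: ((cmx m (st i))^T *m Y)) /\
  (forall M : 'M[F]_(d l), Y *m M = 0 -> M = 0).
Proof.
have [m [Y [p [q [ka [kb [Ypq k1 hk]]]]]]] := cmx_star_scaled_intertwiner l.
(* Otherwise [(jmx m u)^T *m Y = 0] for all [u], but [jmx m u] can be [E_pp]. *)
have ka0 : ka != 0.
  apply/eqP => ka0; have kb1 : kb = 1.
    by case: k1 => // ka1; move: (oner_neq0 F); rewrite -ka1 ka0 eqxx.
  have CY0 w : (cmx m w)^T *m Y = 0.
    by have := hk (st w); rewrite ka0 kb1 scale0r scale1r stK.
  have [u hu] := jmx_surj (block_delta d m p p).
  have : ((jmx m u)^T *m Y) p q = 0.
    rewrite /jmx linear_sum mulmx_suml big1 => [|w _]; first by rewrite mxE.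
    by rewrite linearZ /= -scalemxAl CY0 scaler0.
  rewrite hu block_delta_id trmx_delta -[delta_mx p p]mul1mx mulmx_delta_mulmxE.
  by rewrite mxE eqxx mul1r Ypq => /eqP; rewrite oner_eq0.
have hY i : Y *m cmx l i = (ka^-1 * kb) *: ((cmx m (st i))^T *m Y).
  by rewrite -(scalerK ka0 (Y *m cmx l i)) hk scalerA.
exists m, Y, (ka^-1 * kb); split => // M YM0.
apply/eqP; apply: contraT => /matrix_neq0P [r [j Mrj]].
have [u hu] := jmx_surj (block_delta d l q r).
have : (Y *m jmx l u *m M) p j = 0.
  rewrite /jmx mulmx_sumr mulmx_suml big1 => [|w _]; first by rewrite mxE.
  by rewrite -scalemxAr -scalemxAl hY -scalemxAl -mulmxA YM0 mulmx0 !scaler0.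
by rewrite hu block_delta_id mulmx_delta_mulmxE Ypq mul1r => /eqP; rewrite (negbTE Mrj).
Qed.

Lemma cmx_mul_star_neq0 l x y :
  cmx l x *m cmx l y != 0 -> exists m, cmx m (st y) *m cmx m (st x) != 0.
Proof.
have [m [Y [k [hY Yinj]]]] := cmx_star_intertwiner l.
move=> nz; exists m; apply: contraNneq nz => N0; apply/eqP/Yinj.
rewrite mulmxA hY -scalemxAl -mulmxA hY -scalemxAr mulmxA -trmx_mul N0 trmx0.
by rewrite mul0mx !scaler0.
Qed.

Lemma J_left_step_H i k : J_left_step st gam i k -> H_left_step B i k.
Proof.
case=> h; rewrite (Jmul_tJr _ stK) => /sumr_neq0P [x].
rewrite mulf_eq0 negb_or => /andP[_ /gam_neq0 [l nz]].
apply: (H_left_step_mul htau hB hst); apply: (@cmx_mul_neq0 l).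
by apply: contraNneq nz => CC0; rewrite -mulmxA CC0 mulmx0.
Qed.

Lemma J_right_step_H i k : J_right_step st gam i k -> H_right_step B i k.
Proof.
case=> h; rewrite (Jmul_tJl _ stK) => /sumr_neq0P [y].
rewrite mulf_eq0 negb_or -gam_rot => /andP[_ /gam_neq0 [l nz]].
apply: (H_right_step_mul htau hB hst); apply: (@cmx_mul_neq0 l).
by apply: contraNneq nz => ->; rewrite mul0mx.
Qed.

Lemma J_twosided_step_H i k :
  J_twosided_step st gam i k -> clos_trans _ (H_twosided_step B) i k.
Proof.
case/(J_twosided_step_split stK) => j [/J_left_step_H [h hh] /J_right_step_H [h' hh']].
apply: (@t_trans _ _ i j k); apply: t_step.
- by exists 1, h'; rewrite mul1r.
- by exists h, 1; rewrite mulr1.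
Qed.

Lemma J_left_steps_gam x y z : gam x y z != 0 ->
  J_left_step st gam x (st y) /\ J_left_step st gam (st y) x.
Proof.
move=> nz; split.
  have [l0 nzl] := gam_neq0 nz.
  have [m nzm] : exists m, cmx m (st y) *m cmx m (st x) != 0.
    by apply: (@cmx_mul_star_neq0 l0); apply: contraNneq nzl => ->; rewrite mul0mx.
  have [q [p nzqp]] := matrix_neq0P nzm.
  have [h hh] := jmx_surj (block_delta d m p q).
  exists h; rewrite Jmul_trace.
  rewrite (eq_bigr (fun l => (fr l)^-1 *
      \tr (block_delta d m p q l *m (cmx l (st y) *m cmx l (st x))))) => [|l _].
    by rewrite trace_block_delta mulf_neq0 ?invr_eq0 ?fr_neq0.
  by rewrite hh jmx_tJ mulmxA.
exists (tJ F z); rewrite (Jmul_tJl _ stK) (bigD1 x) //= big1 => [|w /negbTE wx].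
  by rewrite /tJ eqxx mul1r addr0 stK gam_rot.
by rewrite /tJ wx mul0r.
Qed.

Lemma J_twosided_step_star x : J_twosided_step st gam (st x) x.
Proof.
have [m Cm] : exists m, cmx m x != 0.
  have : \sum_l (fr l)^-1 * \tr (cmx l x *m cmx l (st x)) != 0.
    by rewrite trace_cmx_star oner_neq0.
  case/sumr_neq0P => m; rewrite mulf_eq0 negb_or => /andP[_ tr0]; exists m.
  by apply: contraNneq tr0 => ->; rewrite mul0mx linear0.
have [p [q Cpq]] := matrix_neq0P Cm.
have [h hh] := jmx_surj (block_delta d m q p).
exists h, h; rewrite Jmul_trace.
rewrite (eq_bigr (fun l => (fr l)^-1 *
    \tr (block_delta d m q p l *m (cmx l x *m block_delta d m q p l *m cmx l x)))) => [|l _].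
  by rewrite trace_block_delta block_delta_id mulmx_delta_mulmxE !mulf_neq0 ?invr_eq0 ?fr_neq0.
by rewrite jmx_mul hh jmx_tJ stK !mulmxA.
Qed.

Lemma gam_neq0_left_cells x y z : gam x y z != 0 ->
  [/\ cells_of (J_left_step st gam) x (st y),
      cells_of (J_left_step st gam) y (st z) &
      cells_of (J_left_step st gam) z (st x)].
Proof.
have cells x' y' z' : gam x' y' z' != 0 -> cells_of (J_left_step st gam) x' (st y').
  by case/J_left_steps_gam => xy yx; split; apply: t_step.
move=> nz; split; [exact: (cells _ _ z) | apply: (cells _ _ x) | apply: (cells _ _ y)].
- by rewrite -gam_rot.
- by rewrite gam_rot.
Qed.

Lemma J_twosided_cells_star x : cells_of (J_twosided_step st gam) x (st x).
Proof.
split; apply: t_step; last exact: J_twosided_step_star.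
by have := J_twosided_step_star (st x); rewrite stK.
Qed.

End Reduction.

End ValuationRing.
Theorem mainTheorem10
  (G : zmodType) (leG : rel G) (hG : ordered_abelian_group leG)
  (K : fieldType) (nu : K -> G) (hnu : surj_valuation leG nu)
  (F : fieldType) (pi : K -> F) (hpi : residue_map leG nu pi)
  (* the argument below does not use hF *)
  (hF : formally_real F)
  (H : falgType K) (tau : H -> K) (htau : is_trace_form tau)
  (star : H -> H) (hstar : is_lin_invol_antiaut star)
  (* st i is the index of B_i^* in B *)
  (n : nat) (B : n.-tuple H) (hB : star_sym_basis tau star B)
  (st : 'I_n -> 'I_n) (hst : forall i, star (tnth B i) = tnth B (st i))
  (* split semisimple: rho_l (l in L) are a complete set of pairwise
     non-isomorphic irreducible representations (Wedderburn isomorphism) *)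
  (L : finType) (d : L -> nat) (rho : forall l, H -> 'M[K]_(d l))
  (hrho : forall l, is_repr (rho l)) (hd : forall l, (0 < d l)%N)
  (hWinj : forall h : H, (forall l, rho l h = 0) -> h = 0)
  (hWsurj : forall M : forall l, 'M[K]_(d l), exists h : H, forall l, rho l h = M l)
  (c : L -> K) (hc0 : forall l, c l != 0)
  (hschur : forall h : H, tau h = \sum_(l : L) (c l)^-1 * \tr (rho l h))
  (a : L -> G) (ha : forall l, nu (c l) = - (a l *+ 2))
  (* gamma |-> v^gamma, a homomorphism on <a_l> with nu(v^gamma) = gamma *)
  (vp : G -> K)
  (hv : forall g, in_agrp a g -> vp g != 0 /\ nu (vp g) = g)
  (hvhom : forall g1 g2, in_agrp a g1 -> in_agrp a g2 -> vp (g1 + g2) = vp g1 * vp g2)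
  (hbal : forall (l : L) (B' : seq H), star_sym_basis tau star B' ->
            forall b, b \in B' -> forall s t,
              val_ge leG nu (rho l b s t) (- a l)) :
  let gam := fun x y z : 'I_n =>
    gammaJ pi rho (fun l => vp (a l)) (fun l => vp (a l *+ 2)) c
           (tnth B x) (tnth B y) (tnth B z) in
  forall x y z : 'I_n,
    (* (a) *)
    (gam x y z != 0 ->
       [/\ cells_of (J_left_step st gam) x (st y),
           cells_of (J_left_step st gam) y (st z) &
           cells_of (J_left_step st gam) z (st x)])
    (* (b) *)
    /\ (cells_of (J_left_step st gam) x y -> cells_of (H_left_step B) x y)
    (* (c) *)
    /\ (cells_of (J_right_step st gam) x y -> cells_of (H_right_step B) x y)
    /\ (cells_of (J_twosided_step st gam) x y -> cells_of (H_twosided_step B) x y)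
    (* (d) *)
    /\ cells_of (J_twosided_step st gam) x (st x).
Proof.
move=> gam x y z.
have left_H := J_left_step_H hG hnu hpi htau hstar hB hst hrho hv hbal.
have right_H := J_right_step_H hG hnu hpi htau hstar hB hst hrho hv hbal.
split; last split; last split; last split.
- exact: (gam_neq0_left_cells hG hnu hpi htau hstar hB hst hrho hd hWinj hWsurj hc0 hschur
    ha hv hvhom hbal).
- by apply: cells_of_sub => i j /left_H; apply: t_step.
- by apply: cells_of_sub => i j /right_H; apply: t_step.
- exact: cells_of_sub (J_twosided_step_H hG hnu hpi htau hstar hB hst hrho hv hbal) x y.
- exact: (J_twosided_cells_star hG hnu hpi htau hstar hB hst hrho hWsurj hc0 hschur
    ha hv hvhom hbal).
Qed.
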